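(* Let $\sigma$ be a countable relational signature containing a relation symbol of arity at least $2$, and let $\Omega$ be a set of cardinals, each smaller than $2^{\aleph_0}$, with $1\in\Omega$. Let $\mathbf P=\{\mathcal A\in\mathbf S_\sigma:|\mathrm{Aut}(\mathcal A)|\in\Omega\}$. Then $\mathbf P$ is not expressible in $FO(\sigma)$; every abstract logic $L(\sigma)\geq FO(\sigma)$ that can express $\mathbf P$ fails the $\aleph_0$-compactness property; and every such logic which is moreover closed under negation has no sound and complete proof system. In particular this applies to the properties ``$\mathrm{Aut}(\mathcal A)$ is countable'' and ``$\mathrm{Aut}(\mathcal A)$ is finite''.
   Context: $\mathbf S_\sigma$ is the class of $\sigma$-structures; $\mathrm{Aut}(\mathcal A)$ is the automorphism group. An abstract logic over $\sigma$ is a pair $(L(\sigma),\models_{L(\sigma)})$ with $\models_{L(\sigma)}\subseteq\mathbf S_\sigma\times L(\sigma)$ isomorphism-invariant; a class is expressed by it if some sentence is satisfied exactly by its members; $L(\sigma)\geq FO(\sigma)$ means every first-order expressible class is $L(\sigma)$-expressible; $\aleph_0$-compactness: every countable finitely satisfiable set of sentences is satisfiable; closed under negation: each sentence has a sentence true exactly where it is false. A proof system $(\Pi,p,c)$ assigns to each $\pi$ a finite sequence of premisses $p(\pi)$ and a conclusion $c(\pi)$; sound: premisses semantically entail the conclusion; complete: whenever $\Gamma$ entails $\psi$ some $\pi$ has conclusion $\psi$ and all premisses in $\Gamma$. *)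

From mathcomp Require Import all_boot.
From Stdlib Require Import List.


Record signature := Signature { sym : Type; ar : sym -> nat }.
Arguments ar {s} _ : rename.

Definition countable_signature (S : signature) : Prop :=
  exists f : sym S -> nat, injective f.

Record structure (S : signature) := Structure {
  carrier :> Type;
  carrier_inh : inhabited carrier;
  rel : forall s : sym S, ('I_(ar s) -> carrier) -> Prop }.
Arguments rel {S} _ s _.
Arguments carrier {S} _.

Definition is_iso {S : signature} (A B : structure S) (f : A -> B) : Prop :=
  bijective f /\
  forall (s : sym S) (a : 'I_(ar s) -> A), rel A s a <-> rel B s (fun i => f (a i)).

Definition isomorphic {S : signature} (A B : structure S) : Prop :=
  exists f : A -> B, is_iso A B f.

Definition Aut {S : signature} (A : structure S) : Type :=
  { f : A -> A | is_iso A A f }.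

Definition equinumerous (X Y : Type) : Prop := exists f : X -> Y, bijective f.
Definition card_le (X Y : Type) : Prop := exists f : X -> Y, injective f.
Definition card_lt (X Y : Type) : Prop := card_le X Y /\ ~ card_le Y X.

Inductive form (S : signature) : Type :=
| FEq : nat -> nat -> form S
| FRel : forall s : sym S, ('I_(ar s) -> nat) -> form S
| FNot : form S -> form S
| FAnd : form S -> form S -> form S
| FEx : nat -> form S -> form S.
Arguments FEq {S} _ _.
Arguments FRel {S} s _.
Arguments FNot {S} _.
Arguments FAnd {S} _ _.
Arguments FEx {S} _ _.

Fixpoint free_in {S : signature} (x : nat) (phi : form S) : Prop :=
  match phi with
  | FEq i j => x = i \/ x = j
  | FRel s v => exists k, v k = x
  | FNot p => free_in x p
  | FAnd p q => free_in x p \/ free_in x q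
  | FEx y p => x <> y /\ free_in x p
  end.

Definition is_sentence {S : signature} (phi : form S) : Prop :=
  forall x, ~ free_in x phi.

Definition upd {T : Type} (e : nat -> T) (x : nat) (a : T) : nat -> T :=
  fun y => if Nat.eqb y x then a else e y.

Fixpoint eval {S : signature} (A : structure S) (e : nat -> A) (phi : form S) : Prop :=
  match phi with
  | FEq i j => e i = e j
  | FRel s v => rel A s (fun k => e (v k))
  | FNot p => ~ eval A e p
  | FAnd p q => eval A e p /\ eval A e q
  | FEx x p => exists a : A, eval A (upd e x a) p
  end.

Definition fo_models {S : signature} (A : structure S) (phi : form S) : Prop :=
  forall e : nat -> A, eval A e phi.

Definition FO_expressible {S : signature} (P : structure S -> Prop) : Prop :=
  exists phi : form S, is_sentence phi /\ forall A, fo_models A phi <-> P A.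

Record abstract_logic (S : signature) := AbstractLogic {
  sentence : Type;
  models : structure S -> sentence -> Prop;
  models_iso : forall A B : structure S, isomorphic A B ->
                 forall phi, models A phi <-> models B phi }.
Arguments sentence {S} _.
Arguments models {S} _ _ _.

Definition expressible {S : signature} (L : abstract_logic S) (P : structure S -> Prop) : Prop :=
  exists phi : sentence L, forall A, models L A phi <-> P A.

Definition geq_FO {S : signature} (L : abstract_logic S) : Prop :=
  forall P : structure S -> Prop, FO_expressible P -> expressible L P.

Definition countable_set {X : Type} (T : X -> Prop) : Prop :=
  exists f : X -> nat, forall x y, T x -> T y -> f x = f y -> x = y.

Definition satisfiable {S : signature} (L : abstract_logic S) (T : sentence L -> Prop) : Prop :=
  exists A, forall phi, T phi -> models L A phi.

Definition finitely_satisfiable {S : signature} (L : abstract_logic S)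
    (T : sentence L -> Prop) : Prop :=
  forall l : list (sentence L), (forall phi, List.In phi l -> T phi) ->
    satisfiable L (fun phi => List.In phi l).

Definition aleph0_compact {S : signature} (L : abstract_logic S) : Prop :=
  forall T : sentence L -> Prop, countable_set T -> finitely_satisfiable L T -> satisfiable L T.

Definition closed_under_negation {S : signature} (L : abstract_logic S) : Prop :=
  forall phi : sentence L, exists psi : sentence L,
    forall A, models L A psi <-> ~ models L A phi.

Definition entails {S : signature} (L : abstract_logic S)
    (Gamma : sentence L -> Prop) (psi : sentence L) : Prop :=
  forall A, (forall phi, Gamma phi -> models L A phi) -> models L A psi.

Record proof_system {S : signature} (L : abstract_logic S) := ProofSystem {
  proofs : Type;
  premisses : proofs -> list (sentence L);
  conclusion : proofs -> sentence L }.
Arguments proofs {S L} _.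
Arguments premisses {S L PS} _ : rename.
Arguments conclusion {S L PS} _ : rename.

Definition sound {S : signature} {L : abstract_logic S} (PS : proof_system L) : Prop :=
  forall pi : proofs PS, entails L (fun phi => List.In phi (premisses pi)) (conclusion pi).

Definition complete {S : signature} {L : abstract_logic S} (PS : proof_system L) : Prop :=
  forall (Gamma : sentence L -> Prop) (psi : sentence L), entails L Gamma psi ->
    exists pi : proofs PS, conclusion pi = psi /\
      forall phi, List.In phi (premisses pi) -> Gamma phi.

Definition main_conclusions {S : signature} (P : structure S -> Prop) : Prop :=
  ~ FO_expressible P /\
  (forall L : abstract_logic S, geq_FO L -> expressible L P -> ~ aleph0_compact L) /\
  (forall L : abstract_logic S, geq_FO L -> expressible L P -> closed_under_negation L ->
     ~ exists PS : proof_system L, sound PS /\ complete PS).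

(* Hypotheses on Omega, a set of cardinals represented as an isomorphism-invariant
   class of types. *)
Definition cardinal_set (Omega : Type -> Prop) : Prop :=
  forall X Y : Type, equinumerous X Y -> Omega X -> Omega Y.

(* Fix a relation symbol [E] of arity at least 2 and read it as a directed
   graph: x -> y holds when E holds of the tuple (x, y, y, ..., y).  Call a
   class [Q] of types admissible when it contains every one-element type but
   no type into which [nat -> bool] injects; the three properties of the
   theorem (|Aut| in Omega, Aut countable, Aut finite) are admissible, and
   rigid structures always have an admissible automorphism group.

   The successor graph on [nat] and the graph [nat]
      plus countably many copies of the successor graph on [Z] satisfy the
      same sentences: an Ehrenfeucht-Fraisse argument with distance
      thresholds 2^k, carried out for abstract "distance spaces".  The first
      graph is rigid, the second has 2^aleph0 automorphisms (shift any set of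
      copies of [Z]).
   2. Not aleph0-compact.  A countable first-order theory [axiom_form] says
      that E is the only relation and is essentially binary, in- and out-degrees
      are at most 1, every source starts an infinite path, and there are
      infinitely many sources.  Every finite part of it holds in the rigid
      graph [path_model N] (disjoint paths of lengths N, N+1, N+2, ...),
      while in every model the chains issued from sources can be swapped
      pairwise, independently, giving 2^aleph0 automorphisms.
   3. A sound and complete proof system for a logic closed under negation
      makes it aleph0-compact, so 2. excludes such proof systems. *)

From Stdlib Require Import ZArith Lia ClassicalEpsilon FunctionalExtensionality ProofIrrelevance Classical.
From Stdlib Require Cantor.
From Pilot Require Import Defs.
From mathcomp Require Import all_boot zify.
From Stdlib Require Import List.

Lemma Aut_eq {S : signature} (A : structure S) (f g : Aut A) :
  proj1_sig f = proj1_sig g -> f = g.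
Proof.
  destruct f as [f pf]; destruct g as [g pg]; simpl; intros ->.
  f_equal; apply proof_irrelevance.
Qed.

Lemma id_iso {S : signature} (A : structure S) : is_iso A A (fun x => x).
Proof.
  split; [exists (fun x => x); intros x; reflexivity|].
  intros s a; tauto.
Qed.

Section GraphStructures.

Variables (S : signature) (E : sym S).

Definition edge (A : structure S) (x y : A) : Prop :=
  Defs.rel A E (fun i => if nat_of_ord i == 0 then x else y).

Definition graph_rel {X : Type} (Ed : X -> X -> Prop) (s : sym S) (a : 'I_(ar s) -> X) : Prop :=
  s = E /\ (forall i j : 'I_(ar s), 0 < i -> 0 < j -> a i = a j) /\
  (forall i j : 'I_(ar s), nat_of_ord i = 0 -> nat_of_ord j = 1 -> Ed (a i) (a j)).

Definition graph_structure {X : Type} (x0 : X) (Ed : X -> X -> Prop) : structure S :=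
  @Structure S X (inhabits x0) (graph_rel Ed).

Lemma iso_edge (A B : structure S) (f : A -> B) x y :
  is_iso A B f -> (edge A x y <-> edge B (f x) (f y)).
Proof.
  intros [_ H]. unfold edge. rewrite (H E).
  have -> : (fun i : 'I_(ar E) => f (if nat_of_ord i == 0 then x else y)) =
            (fun i => if nat_of_ord i == 0 then f x else f y).
  { apply functional_extensionality; intros i; destruct (nat_of_ord i == 0); reflexivity. }
  tauto.
Qed.

Lemma graph_structure_iso {X : Type} (x0 : X) (Ed : X -> X -> Prop) (f : X -> X) :
  bijective f -> (forall x y, Ed (f x) (f y) <-> Ed x y) ->
  is_iso (graph_structure x0 Ed) (graph_structure x0 Ed) f.
Proof.
  intros Hb He. split; [exact Hb|].
  have finj : injective f by apply bij_inj.
  intros s a; simpl; unfold graph_rel; split.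
  - intros [h1 [h2 h3]]; split; [exact h1|split].
    + intros i j hi hj; rewrite (h2 i j hi hj); reflexivity.
    + intros i j hi hj; apply He; apply h3; auto.
  - intros [h1 [h2 h3]]; split; [exact h1|split].
    + intros i j hi hj; apply finj; apply h2; auto.
    + intros i j hi hj; apply He; apply h3; auto.
Qed.

Hypothesis HE : 2 <= ar E.

Lemma edge_graph_structure {X : Type} (x0 : X) (Ed : X -> X -> Prop) (x y : X) :
  edge (graph_structure x0 Ed) x y <-> Ed x y.
Proof.
  unfold edge; simpl; unfold graph_rel; split.
  - intros [_ [_ H]].
    have h0 : 0 < ar E by lia.
    have h1 : 1 < ar E by lia.
    exact (H (Ordinal h0) (Ordinal h1) erefl erefl).
  - intros H; split; [reflexivity|split].
    + intros [i ?] [j ?] hi hj; simpl in *.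
      destruct i; destruct j; try lia; reflexivity.
    + intros i j hi hj. rewrite hi hj. exact H.
Qed.

End GraphStructures.

Arguments edge {S} E A x y.
Arguments graph_structure {S} E {X} x0 Ed.
Arguments iso_edge {S} E {A B f} x y _.
Arguments edge_graph_structure {S E} HE {X x0 Ed x y}.

Definition admissible (Q : Type -> Prop) : Prop :=
  (forall X : Type, (exists x : X, forall y, y = x) -> Q X) /\
  (forall X : Type, Q X -> ~ card_le (nat -> bool) X).

Lemma cantor_nat : ~ card_le (nat -> bool) nat.
Proof.
  intros [f finj].
  set inv := fun n => epsilon (inhabits (fun _ : nat => true)) (fun g => f g = n).
  set d := fun n => negb (inv n n).
  have Hm : f (inv (f d)) = f d.
  { apply (epsilon_spec (inhabits (fun _ : nat => true)) (fun g => f g = f d)).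
    exists d; reflexivity. }
  have E : inv (f d) = d by apply finj.
  have : d (f d) = negb (inv (f d) (f d)) by reflexivity.
  rewrite E. destruct (d (f d)); discriminate.
Qed.

Lemma admissible_Omega {Omega : Type -> Prop} :
  cardinal_set Omega -> (forall X : Type, Omega X -> card_lt X (nat -> bool)) ->
  Omega unit -> admissible Omega.
Proof.
  intros Hc Hlt Hu; split.
  - intros X [x Hx]. apply (Hc unit X); [|exact Hu].
    exists (fun _ => x), (fun _ => tt); [intros []; reflexivity|].
    intros y; rewrite (Hx y); reflexivity.
  - intros X HX. exact (proj2 (Hlt X HX)).
Qed.

Lemma admissible_countable : admissible (fun X => card_le X nat).
Proof.
  split.
  - intros X [x Hx]. exists (fun _ => 0). intros a b _. rewrite (Hx a) (Hx b). reflexivity.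
  - intros X [g ginj] [f finj]. apply cantor_nat. exists (fun h => g (f h)).
    intros a b H. apply finj, ginj, H.
Qed.

Lemma admissible_finite : admissible (fun X => exists n : nat, card_le X 'I_n).
Proof.
  split.
  - intros X [x Hx]. exists 1, (fun _ => ord0). intros a b _. rewrite (Hx a) (Hx b). reflexivity.
  - intros X [n [g ginj]] [f finj]. apply cantor_nat. exists (fun h => nat_of_ord (g (f h))).
    intros a b H. apply finj, ginj, val_inj, H.
Qed.

Lemma rigid_admissible {S : signature} {A : structure S} {Q : Type -> Prop} :
  admissible Q -> (forall f : A -> A, is_iso A A f -> forall x, f x = x) -> Q (Aut A).
Proof.
  intros [HQ _] Hr. apply HQ. exists (exist _ (fun x => x) (id_iso A)).
  intros [f pf]. apply Aut_eq; simpl. apply functional_extensionality; intros x. apply Hr, pf.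
Qed.

Definition far (t : Z) (u : option Z) : Prop :=
  match u with None => True | Some m => (t < Z.abs m)%Z end.

(* A distance space is a pointed set with a partial signed distance,
   defined exactly between points of the same component and behaving like
   a difference of integer coordinates.  Its component through [origin] is
   a ray starting at [origin], every other displacement exists, and beyond
   any finitely many points there is a point arbitrarily far from all of
   them. *)
Record dist_space := DistSpace {
  dpoint :> Type;
  origin : dpoint;
  dist : dpoint -> dpoint -> option Z;
  dist_refl : forall x, dist x x = Some 0%Z;
  dist_opp : forall x y, dist y x = option_map Z.opp (dist x y);
  dist_trans : forall x y z d, dist x y = Some d -> dist x z = option_map (Z.add d) (dist y z);
  dist_zero : forall x y, dist x y = Some 0%Z -> x = y;
  dist_origin : forall x m, dist origin x = Some m -> (0 <= m)%Z;
  dist_shift : forall x d, (forall m, dist origin x = Some m -> (0 <= m + d)%Z) ->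
               exists y, dist x y = Some d;
  dist_far : forall (l : list dpoint) (t : Z), exists y, forall z, In z l -> far t (dist z y) }.

Definition dist_graph {S : signature} (E : sym S) (D : dist_space) : structure S :=
  graph_structure E (origin D) (fun x y => dist D x y = Some 1%Z).

(* Two distances are k-close when they are equal or both are far beyond the
   threshold 2^k.  Closeness at level k.+1 survives one move of the
   Ehrenfeucht-Fraisse game at level k. *)
Fixpoint threshold (k : nat) : Z := match k with 0 => 1%Z | k'.+1 => (2 * threshold k')%Z end.

Lemma threshold_pos k : (1 <= threshold k)%Z.
Proof. induction k; cbn [threshold]; lia. Qed.

Definition close (k : nat) (u v : option Z) : Prop :=
  u = v \/ (far (threshold k) u /\ far (threshold k) v).

Lemma close_weaken k u v : close k.+1 u v -> close k u v.
Proof.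
  have := threshold_pos k.
  intros hk [->|[h1 h2]]; [left; reflexivity|right].
  cbn [threshold] in h1, h2. destruct u; destruct v; cbn [far] in *; lia.
Qed.

Lemma close_sym k u v : close k u v -> close k v u.
Proof. intros [->|[h1 h2]]; [left|right]; auto. Qed.

Lemma close_opp k u v : close k u v -> close k (option_map Z.opp u) (option_map Z.opp v).
Proof.
  intros [->|[h1 h2]]; [left; reflexivity|right].
  destruct u; destruct v; cbn [far option_map] in *; lia.
Qed.

Lemma close_shift k u v c : close k.+1 u v -> (Z.abs c <= threshold k)%Z ->
  close k (option_map (Z.add c) u) (option_map (Z.add c) v).
Proof.
  intros [->|[h1 h2]] hc; [left; reflexivity|right].
  cbn [threshold] in h1, h2. destruct u; destruct v; cbn [far option_map] in *; lia.
Qed.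

Lemma close_some {k u v c} : close k u v -> (Z.abs c <= threshold k)%Z -> (u = Some c <-> v = Some c).
Proof.
  intros [->|[h1 h2]] hc; [tauto|].
  destruct u; destruct v; cbn [far] in *; split; intros H; inversion H; subst; lia.
Qed.

Definition at_pos {D : dist_space} (e : nat -> D) (p : option nat) : D :=
  match p with None => origin D | Some x => e x end.

Definition in_scope (V : list nat) (p : option nat) : Prop :=
  match p with None => True | Some x => In x V end.

(* Winning positions of the k-round game: all distances are k-close. *)
Definition similar (D1 D2 : dist_space) (k : nat) (V : list nat)
    (e1 : nat -> D1) (e2 : nat -> D2) : Prop :=
  forall p q, in_scope V p -> in_scope V q ->
    close k (dist D1 (at_pos e1 p) (at_pos e1 q)) (dist D2 (at_pos e2 p) (at_pos e2 q)).

Lemma similar_sym {D1 D2 k V e1 e2} : similar D1 D2 k V e1 e2 -> similar D2 D1 k V e2 e1.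
Proof. intros H p q hp hq; apply close_sym, H; auto. Qed.

Lemma at_pos_upd {D1 D2 : dist_space} (e1 : nat -> D1) (e2 : nat -> D2) V y a b p :
  in_scope (y :: V) p ->
  (at_pos (upd e1 y a) p = a /\ at_pos (upd e2 y b) p = b) \/
  (in_scope V p /\ at_pos (upd e1 y a) p = at_pos e1 p /\ at_pos (upd e2 y b) p = at_pos e2 p).
Proof.
  destruct p as [x|]; simpl; [|intros _; right; auto].
  unfold upd. intros Hx. destruct (Nat.eqb_spec x y) as [->|hne]; [left; auto|right].
  destruct Hx as [h|h]; [congruence|auto].
Qed.

Lemma similar_extend (D1 D2 : dist_space) k V e1 e2 y (a : D1) (b : D2) :
  similar D1 D2 k.+1 V e1 e2 ->
  (forall q, in_scope V q -> close k (dist D1 (at_pos e1 q) a) (dist D2 (at_pos e2 q) b)) ->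
  similar D1 D2 k (y :: V) (upd e1 y a) (upd e2 y b).
Proof.
  intros HS Hnew p q hp hq.
  destruct (at_pos_upd e1 e2 V y a b p hp) as [[-> ->]|[hp' [-> ->]]];
  destruct (at_pos_upd e1 e2 V y a b q hq) as [[-> ->]|[hq' [-> ->]]].
  - rewrite !dist_refl; left; reflexivity.
  - rewrite (dist_opp D1 _ a) (dist_opp D2 _ b). apply close_opp, Hnew, hq'.
  - apply Hnew, hp'.
  - apply close_weaken, HS; auto.
Qed.

Lemma forth_near {D1 D2 : dist_space} {k V e1 e2} y {a : D1} {p d} :
  similar D1 D2 k.+1 V e1 e2 -> in_scope V p ->
  dist D1 (at_pos e1 p) a = Some d -> (Z.abs d <= threshold k)%Z ->
  exists b : D2, similar D1 D2 k (y :: V) (upd e1 y a) (upd e2 y b).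
Proof.
  intros HS hp hd hdk.
  have [b hb] : exists b, dist D2 (at_pos e2 p) b = Some d.
  { apply dist_shift. intros m hm.
    destruct (HS None p I hp) as [Heq|[_ hfar]]; simpl at_pos in *.
    - rewrite hm in Heq. have := dist_trans D1 _ _ a _ Heq. rewrite hd. intros ha.
      have := dist_origin D1 _ _ ha. lia.
    - rewrite hm in hfar. have := dist_origin D2 _ _ hm. have := threshold_pos k.
      cbn [far threshold] in hfar. lia. }
  exists b. apply similar_extend; [exact HS|].
  have Hpt : forall (D : dist_space) (e : nat -> D) (c : D) q, dist D (at_pos e p) c = Some d ->
      dist D (at_pos e q) c =
      option_map Z.opp (option_map (Z.add (- d)) (dist D (at_pos e p) (at_pos e q))).
  { intros D e c q hc. rewrite dist_opp. f_equal. apply dist_trans. rewrite dist_opp hc. reflexivity. }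
  intros q hq. rewrite (Hpt D1 e1 a q hd) (Hpt D2 e2 b q hb).
  apply close_opp, close_shift; [apply HS; auto|lia].
Qed.

Lemma forth_far {D1 D2 : dist_space} {k V e1 e2} y (a : D1) :
  similar D1 D2 k.+1 V e1 e2 ->
  (forall q, in_scope V q -> far (threshold k) (dist D1 (at_pos e1 q) a)) ->
  exists b : D2, similar D1 D2 k (y :: V) (upd e1 y a) (upd e2 y b).
Proof.
  intros HS Hfar.
  destruct (dist_far D2 (origin D2 :: List.map e2 V) (threshold k)) as [b Hb].
  exists b. apply similar_extend; [exact HS|]. intros q hq. right. split; [exact (Hfar q hq)|].
  destruct q as [x|]; apply Hb; simpl; [right; apply in_map; exact hq|left; reflexivity].
Qed.

Lemma forth (D1 D2 : dist_space) k V e1 e2 y (a : D1) :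
  similar D1 D2 k.+1 V e1 e2 -> exists b : D2, similar D1 D2 k (y :: V) (upd e1 y a) (upd e2 y b).
Proof.
  intros HS.
  destruct (classic (exists p d, in_scope V p /\ dist D1 (at_pos e1 p) a = Some d /\
                                 (Z.abs d <= threshold k)%Z)) as [[p [d [hp [hd hdk]]]]|Hnear].
  - exact (forth_near y HS hp hd hdk).
  - apply (forth_far y a HS). intros q hq.
    destruct (dist D1 (at_pos e1 q) a) as [m|] eqn:E; simpl; [|exact I].
    apply Z.nle_gt. intros hm. apply Hnear. exists q, m. auto.
Qed.

Lemma back (D1 D2 : dist_space) k V e1 e2 y (b : D2) :
  similar D1 D2 k.+1 V e1 e2 -> exists a : D1, similar D1 D2 k (y :: V) (upd e1 y a) (upd e2 y b).
Proof.
  intros HS. destruct (forth D2 D1 k V e2 e1 y b (similar_sym HS)) as [a Ha].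
  exists a. apply similar_sym, Ha.
Qed.

Fixpoint quantifier_depth {S : signature} (phi : form S) : nat :=
  match phi with
  | FEq _ _ | FRel _ _ => 0
  | FNot p => quantifier_depth p
  | FAnd p q => Nat.max (quantifier_depth p) (quantifier_depth q)
  | FEx _ p => (quantifier_depth p).+1
  end.

Lemma similar_small_dist {D1 D2 : dist_space} {k V e1 e2} x y c :
  similar D1 D2 k V e1 e2 -> In x V -> In y V -> (Z.abs c <= threshold k)%Z ->
  (dist D1 (e1 x) (e1 y) = Some c <-> dist D2 (e2 x) (e2 y) = Some c).
Proof. intros HS hx hy hc. exact (close_some (HS (Some x) (Some y) hx hy) hc). Qed.

Lemma similar_eq {D1 D2 : dist_space} {k V e1 e2} x y :
  similar D1 D2 k V e1 e2 -> In x V -> In y V -> (e1 x = e1 y <-> e2 x = e2 y).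
Proof.
  intros HS hx hy.
  have h0 : (Z.abs 0 <= threshold k)%Z by (have := threshold_pos k; lia).
  have Hd := similar_small_dist x y 0 HS hx hy h0.
  split; intros H; apply dist_zero; apply Hd; rewrite H dist_refl; reflexivity.
Qed.

Lemma EF {S : signature} (E : sym S) {D1 D2 : dist_space} (phi : form S) : forall k V e1 e2,
  quantifier_depth phi <= k -> (forall x, free_in x phi -> In x V) ->
  similar D1 D2 k V e1 e2 ->
  (eval (dist_graph E D1) e1 phi <-> eval (dist_graph E D2) e2 phi).
Proof.
  induction phi as [i j|s v|p IH|p IHp q IHq|y p IH]; intros k V e1 e2 hk hfv HS; simpl in *.
  - apply (similar_eq i j HS); apply hfv; auto.
  - unfold graph_rel.
    have Hv : forall i : 'I_(ar s), In (v i) V by (intros i; apply hfv; exists i; reflexivity).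
    have h1 : (Z.abs 1 <= threshold k)%Z by (have := threshold_pos k; lia).
    split; intros [hs [h2 h3]]; (split; [exact hs|split]); intros i j hi hj.
    + apply (similar_eq _ _ HS (Hv i) (Hv j)), h2; auto.
    + apply (similar_small_dist _ _ _ HS (Hv i) (Hv j) h1), h3; auto.
    + apply (similar_eq _ _ HS (Hv i) (Hv j)), h2; auto.
    + apply (similar_small_dist _ _ _ HS (Hv i) (Hv j) h1), h3; auto.
  - have := IH k V e1 e2 hk hfv HS. tauto.
  - have h1 := IHp k V e1 e2 ltac:(lia) ltac:(intros x hx; apply hfv; left; exact hx) HS.
    have h2 := IHq k V e1 e2 ltac:(lia) ltac:(intros x hx; apply hfv; right; exact hx) HS.
    tauto.
  - destruct k as [|k]; [lia|].
    have hfv' : forall x, free_in x p -> In x (y :: V).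
    { intros x hx. destruct (Nat.eq_dec x y) as [->|hne]; [left; reflexivity|right; apply hfv; auto]. }
    split.
    + intros [a Ha]. destruct (forth D1 D2 k V e1 e2 y a HS) as [b Hb].
      exists b. apply (IH k (y :: V) _ _ ltac:(lia) hfv' Hb). exact Ha.
    + intros [b Hb]. destruct (back D1 D2 k V e1 e2 y b HS) as [a Ha].
      exists a. apply (IH k (y :: V) _ _ ltac:(lia) hfv' Ha). exact Hb.
Qed.

Lemma dist_graph_equiv {S : signature} (E : sym S) (D1 D2 : dist_space) {phi : form S} :
  is_sentence phi -> (fo_models (dist_graph E D1) phi <-> fo_models (dist_graph E D2) phi).
Proof.
  intros Hs.
  have HS : forall (e1 : nat -> D1) (e2 : nat -> D2), similar D1 D2 (quantifier_depth phi) nil e1 e2.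
  { intros e1 e2 [x|] [y|] hx hy; simpl in *; try contradiction.
    rewrite !dist_refl; left; reflexivity. }
  have hfv : forall x, free_in x phi -> In x nil by (intros x hx; exfalso; exact (Hs x hx)).
  have Hd := fun e1 e2 => EF E phi _ nil e1 e2 (leqnn _) hfv (HS e1 e2).
  split; intros H e.
  - apply (Hd (fun _ => origin D1) e), H.
  - apply (Hd e (fun _ => origin D2)), H.
Qed.

Lemma le_list_max {l : list nat} {x} : In x l -> x <= list_max l.
Proof.
  intros hx. have := proj1 (list_max_le l (list_max l)) (le_n _).
  rewrite Forall_forall. intros H. apply/leP. exact (H x hx).
Qed.

Definition ray : dist_space.
Proof.
  refine (@DistSpace nat 0 (fun x y => Some (Z.of_nat y - Z.of_nat x)%Z) _ _ _ _ _ _ _).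
  - intros x; f_equal; lia.
  - intros x y; simpl; f_equal; lia.
  - intros x y z d H; inversion H; subst; simpl; f_equal; lia.
  - intros x y H; inversion H; lia.
  - intros x m H; inversion H; lia.
  - intros x d H. exists (Z.to_nat (Z.of_nat x + d)). have := H _ erefl. intros h. f_equal. lia.
  - intros l t. exists (list_max l + Z.to_nat t + 1). intros z hz. have := le_list_max hz. simpl. lia.
Defined.

Definition ray_and_lines_dist (x y : nat + nat * Z) : option Z :=
  match x, y with
  | inl m, inl n => Some (Z.of_nat n - Z.of_nat m)%Z
  | inr (i, z), inr (j, w) => if Nat.eqb i j then Some (w - z)%Z else None
  | _, _ => None
  end.

Definition ray_and_lines : dist_space.
Proof.
  refine (@DistSpace (nat + nat * Z) (inl 0) ray_and_lines_dist _ _ _ _ _ _ _);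
    unfold ray_and_lines_dist.
  - intros [x|[i z]]; [f_equal; lia|]. rewrite Nat.eqb_refl. f_equal; lia.
  - intros [x|[i z]] [y|[j w]]; simpl; try reflexivity; [f_equal; lia|].
    rewrite Nat.eqb_sym. destruct (Nat.eqb i j); simpl; [f_equal; lia|reflexivity].
  - intros [x|[i z]] [y|[j w]] [u|[l v]] d H; simpl; try discriminate; try reflexivity.
    + inversion H; subst; simpl; f_equal; lia.
    + destruct (Nat.eqb_spec i j) as [<-|]; [|discriminate]. inversion H; subst.
      destruct (Nat.eqb i l); simpl; [f_equal; lia|reflexivity].
  - intros [x|[i z]] [y|[j w]] H; try discriminate.
    + inversion H; f_equal; lia.
    + destruct (Nat.eqb_spec i j) as [<-|]; [|discriminate]. inversion H. do 2 f_equal. lia.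
  - intros [x|[i z]] m H; try discriminate. inversion H; lia.
  - intros [x|[i z]] d H.
    + exists (inl (Z.to_nat (Z.of_nat x + d))). have := H _ erefl. intros h. f_equal; lia.
    + exists (inr (i, (z + d)%Z)). rewrite Nat.eqb_refl. f_equal; lia.
  - intros l t. set i := (list_max (List.map (fun x => if x is inr (j, _) then j else 0) l)).+1.
    exists (inr (i, 0%Z)). intros [x|[j z]] hz; simpl; [exact I|].
    have := le_list_max (in_map (fun x => if x is inr (j, _) then j else 0) _ _ hz).
    destruct (Nat.eqb_spec j i); simpl; [lia|trivial].
Defined.

Section SeparatingGraphs.

Variables (S : signature) (E : sym S).

Definition shift_lines (g : nat -> bool) (c : Z) (x : nat + nat * Z) : nat + nat * Z :=
  match x with inl m => inl m | inr (i, z) => inr (i, (z + (if g i then c else 0))%Z) end.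

Lemma shift_lines_iso g :
  is_iso (dist_graph E ray_and_lines) (dist_graph E ray_and_lines) (shift_lines g 1).
Proof.
  apply graph_structure_iso.
  - exists (shift_lines g (-1)); intros [m|[i z]]; simpl; try reflexivity;
      do 2 f_equal; destruct (g i); lia.
  - intros [m|[i z]] [n|[j w]]; simpl; try tauto.
    destruct (Nat.eqb_spec i j) as [<-|]; [|tauto].
    destruct (g i); split; intros H; inversion H; f_equal; lia.
Qed.

Lemma ray_and_lines_huge : card_le (nat -> bool) (Aut (dist_graph E ray_and_lines)).
Proof.
  exists (fun g => exist _ (shift_lines g 1) (shift_lines_iso g)).
  intros g h H. apply (f_equal (@proj1_sig _ _)) in H. simpl in H.
  apply functional_extensionality; intros i.
  have := f_equal (fun F => F (inr (i, 0%Z))) H. simpl.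
  destruct (g i); destruct (h i); simpl; intros Hi; inversion Hi; auto; lia.
Qed.

Hypothesis HE : 2 <= ar E.

(* (nat, successor) is rigid: 0 is its only point without predecessor. *)
Lemma ray_rigid (f : dist_graph E ray -> dist_graph E ray) :
  is_iso _ _ f -> forall x, f x = x.
Proof.
  intros Hf.
  have Hsucc : forall x y : nat, edge E (dist_graph E ray) x y <-> y = x + 1.
  { intros x y. unfold dist_graph. rewrite (edge_graph_structure HE). simpl. split.
    - intros H; inversion H; lia.
    - intros ->; f_equal; lia. }
  have f0 : f 0 = 0.
  { have [[g fg gf] _] := Hf.
    destruct (f 0) as [|n] eqn:E0; [reflexivity|exfalso].
    have h : edge E (dist_graph E ray) (f (g n)) (f 0) by rewrite gf E0; apply Hsucc; lia.
    apply (iso_edge E (g n) 0 Hf) in h. apply Hsucc in h. lia. }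
  intros x; induction x as [|x IH]; [exact f0|].
  have h : edge E (dist_graph E ray) x x.+1 by apply Hsucc; lia.
  apply (@iso_edge S E _ _ f x x.+1 Hf) in h. apply Hsucc in h. rewrite h IH. lia.
Qed.

(* The two graphs are elementarily equivalent but only one of them has an
   admissible automorphism group: no admissible class is first-order. *)
Lemma not_FO_expressible (Q : Type -> Prop) :
  admissible Q -> ~ FO_expressible (fun A : structure S => Q (Aut A)).
Proof.
  intros HQ [phi [Hs H]].
  have hray : Q (Aut (dist_graph E ray)) := rigid_admissible HQ ray_rigid.
  apply H, (dist_graph_equiv E ray ray_and_lines Hs), H in hray.
  exact (proj2 HQ _ hray ray_and_lines_huge).
Qed.

End SeparatingGraphs.

Arguments not_FO_expressible {S E} HE {Q} HQ.

Lemma upd_same {T : Type} (e : nat -> T) x a : upd e x a x = a.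
Proof. unfold upd. rewrite Nat.eqb_refl. reflexivity. Qed.

Lemma upd_other {T : Type} (e : nat -> T) x y a : y <> x -> upd e x a y = e y.
Proof. intros h. unfold upd. destruct (Nat.eqb_spec y x); [contradiction|reflexivity]. Qed.

Lemma eval_ext {S : signature} {A : structure S} {e e' : nat -> A} {phi : form S} :
  eval A e phi -> (forall x, e x = e' x) -> eval A e' phi.
Proof. intros H1 H2. have <- : e = e' by apply functional_extensionality. exact H1. Qed.

Definition Ftrue {S : signature} : form S := FEx 0 (FEq 0 0).

Lemma eval_Ftrue {S : signature} (A : structure S) e : eval A e Ftrue.
Proof. exists (e 0). reflexivity. Qed.

Lemma closed_Ftrue {S : signature} {x} : ~ free_in x (@Ftrue S).
Proof. simpl. lia. Qed.

Fixpoint Fexists_below {S : signature} (n : nat) (phi : form S) : form S :=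
  match n with 0 => phi | n'.+1 => FEx n' (Fexists_below n' phi) end.

Lemma eval_Fexists_below {S : signature} (A : structure S) phi n : forall e,
  eval A e (Fexists_below n phi) <->
  exists g : nat -> A, eval A (fun x => if x < n then g x else e x) phi.
Proof.
  induction n as [|n IH]; intros e; cbn [Fexists_below eval].
  - split; [intros H; exists e|intros [g H]]; apply (eval_ext H); reflexivity.
  - have Hupd : forall (g : nat -> A) a x,
        (if x < n then g x else upd e n a x) =
        (if x < n.+1 then (if x < n then g x else a) else e x).
    { intros g a x. unfold upd. case: (Nat.eqb_spec x n) => [->|hne]; [by rewrite ltnn ltnSn|].
      have -> : (x < n.+1) = (x < n) by (apply/idP/idP; lia). by case: (x < n). }
    split.
    + intros [a Ha]. destruct (proj1 (IH _) Ha) as [g Hg].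
      exists (fun x => if x < n then g x else a). exact (eval_ext Hg (Hupd g a)).
    + intros [g Hg]. exists (g n). apply IH. exists g. apply (eval_ext Hg).
      intros x. rewrite Hupd. case: (ltngtP x n) => [h|h|->]; rewrite ?h ?ltnn ?ltnSn //.
      have -> : (x < n.+1) = false by apply/negbTE; lia. by [].
Qed.

Lemma free_Fexists_below {S : signature} (phi : form S) n x :
  free_in x (Fexists_below n phi) -> free_in x phi /\ n <= x.
Proof.
  revert x; induction n as [|n IH]; intros x; cbn [Fexists_below]; [intros h; split; [exact h|lia]|].
  cbn [free_in]. intros [h1 h2]. apply IH in h2. destruct h2; split; auto; lia.
Qed.

Definition tuple_env {T : Type} {k : nat} (a : 'I_k -> T) (d : T) (x : nat) : T :=
  match (insub x : option 'I_k) with Some j => a j | None => d end.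

Lemma tuple_env_ord {T : Type} {k : nat} (a : 'I_k -> T) d (j : 'I_k) : tuple_env a d j = a j.
Proof. unfold tuple_env. rewrite valK. reflexivity. Qed.

Lemma tuple_env_args {S : signature} {A : structure S} (s : sym S) (a : 'I_(ar s) -> A) d d' :
  (fun k : 'I_(ar s) => if nat_of_ord k < ar s then tuple_env a d k else d') = a.
Proof. apply functional_extensionality; intros k. by rewrite (ltn_ord k) tuple_env_ord. Qed.

Definition injective_below {T : Type} (h : nat -> T) (k : nat) : Prop :=
  forall i j, i < k -> j < k -> h i = h j -> i = j.

Lemma pigeonhole {T : Type} (h : nat -> T) k : forall L : list T,
  injective_below h k -> (forall i, i < k -> In (h i) L) -> k <= length L.
Proof.
  induction k as [|k IH]; intros L Hi HL; [lia|].
  destruct (in_split _ _ (HL k (ltnSn k))) as [L1 [L2 EL]].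
  have : k <= length (L1 ++ L2).
  { apply IH; [intros i j hi hj; apply Hi; lia|].
    intros i hi. have := HL i ltac:(lia). rewrite EL. intros Hin.
    apply in_app_or in Hin. apply in_or_app. destruct Hin as [H1|[H2|H2]]; auto.
    exfalso. have := Hi i k ltac:(lia) ltac:(lia) (esym H2). lia. }
  rewrite EL !length_app. simpl. lia.
Qed.

Fixpoint choices {T : Type} (next : list T -> T) (n : nat) : list T :=
  match n with 0 => nil | n'.+1 => next (choices next n') :: choices next n' end.

Lemma choices_in {T : Type} (next : list T -> T) i j :
  i < j -> In (next (choices next i)) (choices next j).
Proof.
  induction j as [|j IH]; intros h; [lia|]. cbn [choices].
  destruct (Nat.eq_dec i j) as [->|hne]; [left; reflexivity|right; apply IH; lia].
Qed.

Lemma injective_sequence {T : Type} {P : T -> Prop} :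
  inhabited T ->
  (forall n, exists h : nat -> T, (forall i, i < n -> P (h i)) /\ injective_below h n) ->
  exists s : nat -> T, (forall i, P (s i)) /\ injective s.
Proof.
  intros hT H.
  set next := fun L : list T => epsilon hT (fun y => P y /\ ~ In y L).
  have Hnext : forall L, P (next L) /\ ~ In (next L) L.
  { intros L. apply (epsilon_spec hT (fun y => P y /\ ~ In y L)).
    destruct (H (length L).+1) as [h [Hs Hi]].
    apply NNPP; intros Hno.
    have : (length L).+1 <= length L; [|lia].
    apply (pigeonhole h); [exact Hi|]. intros i hi. apply NNPP; intros hni. apply Hno.
    exists (h i); split; auto. }
  exists (fun i => next (choices next i)). split; [intros i; apply Hnext|].
  intros i j Eij. apply NNPP; intros hne.
  destruct (Nat.lt_total i j) as [h|[h|h]]; [| contradiction |].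
  - apply (proj2 (Hnext (choices next j))). rewrite -Eij. apply choices_in; lia.
  - apply (proj2 (Hnext (choices next i))). rewrite Eij. apply choices_in; lia.
Qed.

Section GraphAxioms.

Variables (S : signature) (E : sym S).

Definition Fedge (u v : nat) : form S :=
  FRel E (fun i : 'I_(ar E) => if nat_of_ord i == 0 then u else v).

Lemma eval_Fedge (A : structure S) e u v : eval A e (Fedge u v) <-> edge E A (e u) (e v).
Proof.
  simpl. unfold edge.
  have -> : (fun k : 'I_(ar E) => e (if nat_of_ord k == 0 then u else v)) =
            (fun k => if nat_of_ord k == 0 then e u else e v).
  { apply functional_extensionality; intros k; by case: (nat_of_ord k == 0). }
  tauto.
Qed.

Lemma free_Fedge x u v : free_in x (Fedge u v) -> x = u \/ x = v.
Proof. simpl. intros [k hk]. destruct (nat_of_ord k == 0); auto. Qed.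

Definition source (A : structure S) (a : A) : Prop := ~ exists b, edge E A b a.
Definition sink (A : structure S) (a : A) : Prop := ~ exists b, edge E A a b.

Definition Fsource (x : nat) : form S := FNot (FEx x.+1 (Fedge x.+1 x)).

Lemma eval_Fsource (A : structure S) e x : eval A e (Fsource x) <-> source A (e x).
Proof.
  unfold Fsource, source. simpl. split; intros H [b Hb]; apply H; exists b.
  - apply eval_Fedge. rewrite upd_same upd_other; [exact Hb|lia].
  - apply eval_Fedge in Hb. rewrite upd_same upd_other in Hb; [exact Hb|lia].
Qed.

Lemma free_Fsource x y : free_in y (Fsource x) -> y = x.
Proof. simpl. intros [h1 h2]. apply free_Fedge in h2. lia. Qed.

Fixpoint has_path (A : structure S) (n : nat) (a : A) : Prop :=
  match n with
  | 0 => True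
  | n'.+1 => exists b, edge E A a b /\ has_path A n' b
  end.

Fixpoint Fpath (n x : nat) : form S :=
  match n with
  | 0 => Ftrue
  | n'.+1 => FEx x.+1 (FAnd (Fedge x x.+1) (Fpath n' x.+1))
  end.

Lemma eval_Fpath (A : structure S) n : forall e x, eval A e (Fpath n x) <-> has_path A n (e x).
Proof.
  induction n as [|n IH]; intros e x; simpl.
  - split; [tauto|intros _; apply eval_Ftrue].
  - split; intros [b [h1 h2]]; exists b.
    + apply eval_Fedge in h1. rewrite upd_same upd_other in h1; [|lia].
      split; [exact h1|]. apply IH in h2. rewrite upd_same in h2. exact h2.
    + split; [apply eval_Fedge; rewrite upd_same upd_other; [exact h1|lia]|].
      apply IH. rewrite upd_same. exact h2.
Qed.

Lemma free_Fpath n : forall x y, free_in y (Fpath n x) -> y = x.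
Proof.
  induction n as [|n IH]; intros x y; simpl; [lia|].
  intros [h1 [h2|h2]]; [apply free_Fedge in h2|apply IH in h2]; lia.
Qed.

Definition in_functional (A : structure S) : Prop :=
  forall x y z : A, edge E A y x -> edge E A z x -> y = z.
Definition out_functional (A : structure S) : Prop :=
  forall x y z : A, edge E A x y -> edge E A x z -> y = z.

Definition Fin_functional : form S :=
  FNot (FEx 0 (FEx 1 (FEx 2 (FAnd (Fedge 1 0) (FAnd (Fedge 2 0) (FNot (FEq 1 2))))))).
Definition Fout_functional : form S :=
  FNot (FEx 0 (FEx 1 (FEx 2 (FAnd (Fedge 0 1) (FAnd (Fedge 0 2) (FNot (FEq 1 2))))))).

Lemma eval_Fin_functional (A : structure S) e : eval A e Fin_functional <-> in_functional A.
Proof.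
  unfold Fin_functional. cbn [eval]. split.
  - intros H x y z h1 h2. apply NNPP. intros h3. apply H. exists x, y, z.
    rewrite !eval_Fedge. unfold upd; simpl. auto.
  - intros H [x [y [z [h1 [h2 h3]]]]]. rewrite !eval_Fedge in h1 h2. unfold upd in *; simpl in *.
    apply h3, (H x); auto.
Qed.

Lemma eval_Fout_functional (A : structure S) e : eval A e Fout_functional <-> out_functional A.
Proof.
  unfold Fout_functional. cbn [eval]. split.
  - intros H x y z h1 h2. apply NNPP. intros h3. apply H. exists x, y, z.
    rewrite !eval_Fedge. unfold upd; simpl. auto.
  - intros H [x [y [z [h1 [h2 h3]]]]]. rewrite !eval_Fedge in h1 h2. unfold upd in *; simpl in *.
    apply h3, (H x); auto.
Qed.

Definition Fbinary (i : nat) : form S :=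
  if (2 <= i) && (i < ar E) then
    FNot (Fexists_below (ar E) (FAnd (FRel E (fun j : 'I_(ar E) => nat_of_ord j)) (FNot (FEq i 1))))
  else Ftrue.

Lemma Fbinary_sound (A : structure S) :
  (forall i, fo_models A (Fbinary i)) ->
  forall (a : 'I_(ar E) -> A) (j j1 : 'I_(ar E)), nat_of_ord j1 = 1 -> 2 <= j ->
    Defs.rel A E a -> a j = a j1.
Proof.
  intros H a j j1 h1 h2 Hr. apply NNPP; intros hne.
  have := H (nat_of_ord j) (fun _ => a j). unfold Fbinary.
  have -> : (2 <= j) && (j < ar E) by (apply/andP; split; [exact h2|exact (ltn_ord j)]).
  cbn [eval]. intros Hn; apply Hn. apply eval_Fexists_below. exists (tuple_env a (a j)).
  cbn [eval]. rewrite tuple_env_args. split; [exact Hr|].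
  have h1' : 1 < ar E by (rewrite -h1; exact (ltn_ord j1)).
  rewrite (ltn_ord j) tuple_env_ord h1' -h1 tuple_env_ord. exact hne.
Qed.

Definition Fempty (s : sym S) : form S :=
  if excluded_middle_informative (s = E) then Ftrue
  else FNot (Fexists_below (ar s) (FRel s (fun j : 'I_(ar s) => nat_of_ord j))).

Lemma Fempty_sound (A : structure S) :
  (forall s, fo_models A (Fempty s)) -> forall s (a : 'I_(ar s) -> A), s <> E -> ~ Defs.rel A s a.
Proof.
  intros H s a hs Hr. destruct (@carrier_inh S A) as [d].
  have := H s (fun _ => d). unfold Fempty.
  destruct (excluded_middle_informative (s = E)) as [e|ne]; [contradiction|].
  cbn [eval]. intros Hn; apply Hn. apply eval_Fexists_below. exists (tuple_env a d).
  cbn [eval]. rewrite tuple_env_args. exact Hr.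
Qed.

Fixpoint Fdistinct_from (m c : nat) : form S :=
  match c with 0 => Ftrue | c'.+1 => FAnd (FNot (FEq c' m)) (Fdistinct_from m c') end.

Lemma eval_Fdistinct_from (A : structure S) e m c :
  eval A e (Fdistinct_from m c) <-> forall i, i < c -> e i <> e m.
Proof.
  induction c as [|c IH]; cbn [Fdistinct_from eval].
  - split; [intros _ i hi; lia|intros _; apply eval_Ftrue].
  - rewrite IH. split.
    + intros [h1 h2] i hi. destruct (Nat.eq_dec i c) as [->|hne]; [exact h1|apply h2; lia].
    + intros H; split; [apply H; lia|intros i hi; apply H; lia].
Qed.

Lemma free_Fdistinct_from m c x : free_in x (Fdistinct_from m c) -> x = m \/ x < c.
Proof.
  induction c as [|c IH]; cbn [Fdistinct_from free_in].
  - intros h; exfalso; exact (closed_Ftrue h).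
  - intros [[h|h]|h]; [lia|left; exact h|destruct (IH h); [left|right]; lia].
Qed.

Fixpoint Fsources (m n : nat) : form S :=
  match n with
  | 0 => Ftrue
  | n'.+1 => FEx m (FAnd (Fsource m) (FAnd (Fdistinct_from m m) (Fsources m.+1 n')))
  end.

Lemma free_Fsources n : forall m x, free_in x (Fsources m n) -> x < m.
Proof.
  induction n as [|n IH]; intros m x; cbn [Fsources free_in].
  - intros h; exfalso; exact (closed_Ftrue h).
  - intros [hne [h|[h|h]]].
    + apply free_Fsource in h; lia.
    + apply free_Fdistinct_from in h; lia.
    + apply IH in h; lia.
Qed.

Lemma Fsources_sound (A : structure S) n : forall m e,
  eval A e (Fsources m n) -> (forall i, i < m -> source A (e i)) -> injective_below e m ->
  exists h : nat -> A, (forall i, i < m + n -> source A (h i)) /\ injective_below h (m + n).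
Proof.
  induction n as [|n IH]; intros m e He Hs Hi.
  - exists e. rewrite addn0. auto.
  - cbn [Fsources eval] in He. destruct He as [a [h1 [h2 h3]]].
    apply eval_Fsource in h1. rewrite upd_same in h1.
    have {}h2 := proj1 (eval_Fdistinct_from _ _ _ _) h2.
    destruct (IH m.+1 _ h3) as [h [Hh1 Hh2]].
    + intros i hi. destruct (Nat.eq_dec i m) as [->|hne]; [rewrite upd_same; exact h1|].
      rewrite upd_other; [apply Hs; lia|exact hne].
    + intros i j hi hj Eij.
      destruct (Nat.eq_dec i m) as [->|hne1]; destruct (Nat.eq_dec j m) as [->|hne2]; auto.
      * exfalso. apply (h2 j); [lia|]. rewrite Eij; reflexivity.
      * exfalso. apply (h2 i); [lia|]. exact Eij.
      * rewrite !upd_other in Eij; auto. apply Hi; auto; lia.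
    + exists h. rewrite addnS. split; [exact Hh1|exact Hh2].
Qed.

Lemma Fsources_complete (A : structure S) (g : nat -> A) :
  (forall i, source A (g i)) -> injective g ->
  forall n m e, (forall i, i < m -> e i = g i) -> eval A e (Fsources m n).
Proof.
  intros Hs Hi n; induction n as [|n IH]; intros m e He; cbn [Fsources eval].
  - apply eval_Ftrue.
  - exists (g m). split; [|split].
    + apply eval_Fsource. rewrite upd_same. apply Hs.
    + apply eval_Fdistinct_from. intros i hi. rewrite upd_same upd_other; [|lia].
      rewrite He; [|exact hi]. intros Eg. apply Hi in Eg. lia.
    + apply IH. intros i hi. destruct (Nat.eq_dec i m) as [->|hne]; [rewrite upd_same; reflexivity|].
      rewrite upd_other; [apply He; lia|exact hne].
Qed.

Definition Fpaths (n : nat) : form S := FNot (FEx 0 (FAnd (Fsource 0) (FNot (Fpath n 0)))).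

Lemma eval_Fpaths (A : structure S) e n :
  eval A e (Fpaths n) <-> forall a, source A a -> has_path A n a.
Proof.
  unfold Fpaths. cbn [eval]. split.
  - intros H a ha. apply NNPP; intros hp. apply H. exists a. split.
    + apply eval_Fsource. rewrite upd_same. exact ha.
    + rewrite eval_Fpath upd_same. exact hp.
  - intros H [a [h1 h2]]. apply eval_Fsource in h1. rewrite eval_Fpath upd_same in h2.
    rewrite upd_same in h1. apply h2, H, h1.
Qed.

Inductive axiom :=
| AxBinary (i : nat)
| AxEmpty (s : sym S)
| AxInFunctional
| AxOutFunctional
| AxPaths (n : nat)
| AxSources (n : nat).

Definition axiom_form (ax : axiom) : form S :=
  match ax with
  | AxBinary i => Fbinary i
  | AxEmpty s => Fempty s
  | AxInFunctional => Fin_functional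
  | AxOutFunctional => Fout_functional
  | AxPaths n => Fpaths n
  | AxSources n => Fsources 0 n
  end.

Lemma axiom_sentence ax : is_sentence (axiom_form ax).
Proof.
  intros x; destruct ax as [i|s| | |n|n]; cbn [axiom_form].
  - unfold Fbinary. case: ifP => [/andP [h2 hi]|_]; [|apply closed_Ftrue].
    cbn [free_in]. intros h. apply free_Fexists_below in h.
    destruct h as [[[j hj]|h] hk]; cbn [free_in] in *; [have := ltn_ord j|]; lia.
  - unfold Fempty. destruct (excluded_middle_informative (s = E)); [apply closed_Ftrue|].
    cbn [free_in]. intros h. apply free_Fexists_below in h. destruct h as [[j hj] hk].
    have := ltn_ord j. lia.
  - simpl. intros [h0 [h1 [h2 [h|[h|h]]]]]; try (apply free_Fedge in h); lia.
  - simpl. intros [h0 [h1 [h2 [h|[h|h]]]]]; try (apply free_Fedge in h); lia.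
  - cbn [Fpaths free_in]. intros [h [h1|h1]]; [apply free_Fsource in h1|apply free_Fpath in h1]; lia.
  - intros h. apply free_Fsources in h. lia.
Qed.

(* Only the path axioms constrain the lengths of the paths. *)
Definition axiom_length (ax : axiom) : nat := if ax is AxPaths n then n else 0.

Lemma iso_source {A : structure S} {f : A -> A} {a} : is_iso A A f -> source A a -> source A (f a).
Proof.
  intros Hf Ha [b Hb]. have [[g _ gf] _] := Hf.
  apply Ha. exists (g b). apply (iso_edge E (g b) a Hf). rewrite gf. exact Hb.
Qed.

Lemma iso_sink {A : structure S} {f : A -> A} {a} : is_iso A A f -> sink A a -> sink A (f a).
Proof.
  intros Hf Ha [b Hb]. have [[g _ gf] _] := Hf.
  apply Ha. exists (g b). apply (iso_edge E a (g b) Hf). rewrite gf. exact Hb.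
Qed.

Hypothesis HE : 2 <= ar E.

(* The graph [path_model N]: for every [i], a path (i, 0) -> ... -> (i, N + i)
   with [N + i] edges.  Its components have pairwise different lengths,
   so it is rigid, and it satisfies every axiom whose path length is at
   most [N]. *)
Definition path_point (N : nat) : Type := {p : nat * nat | p.2 <= N + p.1}.

Definition path_edge (N : nat) (p q : path_point N) : Prop :=
  (proj1_sig p).1 = (proj1_sig q).1 /\ (proj1_sig q).2 = (proj1_sig p).2 + 1.

Definition mk_point (N i j : nat) (h : j <= N + i) : path_point N := exist _ (i, j) h.

Lemma path_point_eq N (p q : path_point N) : proj1_sig p = proj1_sig q -> p = q.
Proof. destruct p as [p hp]; destruct q as [q hq]; simpl; intros ->. f_equal. apply eq_irrelevance. Qed.

Definition path_model (N : nat) : structure S :=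
  graph_structure E (mk_point N 0 0 (leq0n _)) (path_edge N).

Lemma edge_path_model N (x y : path_point N) : edge E (path_model N) x y <-> path_edge N x y.
Proof. exact (edge_graph_structure HE). Qed.

Lemma path_model_source N (p : path_point N) : source (path_model N) p <-> (proj1_sig p).2 = 0.
Proof.
  unfold source. destruct p as [[i j] hp]; cbn [proj1_sig fst snd] in hp |- *. split.
  - intros H. destruct j as [|j]; [reflexivity|exfalso].
    apply H. have hj : j <= N + i by lia.
    exists (mk_point N i j hj). apply edge_path_model. unfold path_edge; simpl. split; [reflexivity|lia].
  - intros H [b Hb]. apply edge_path_model in Hb. unfold path_edge in Hb. simpl in Hb. lia.
Qed.

Lemma path_model_sink N (p : path_point N) :
  sink (path_model N) p <-> (proj1_sig p).2 = N + (proj1_sig p).1.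
Proof.
  unfold sink. destruct p as [[i j] hp]; cbn [proj1_sig fst snd] in hp |- *. split.
  - intros H. apply NNPP; intros hne. apply H.
    have hj : j.+1 <= N + i by lia.
    exists (mk_point N i j.+1 hj). apply edge_path_model. unfold path_edge; simpl. split; [reflexivity|lia].
  - intros H [[[i' j'] hb] Hb]. apply edge_path_model in Hb. unfold path_edge in Hb; simpl in *. lia.
Qed.

Lemma path_model_iso_along {N} {f : path_model N -> path_model N} :
  is_iso _ _ f -> forall i j (h : j <= N + i),
    (proj1_sig (f (mk_point N i j h))).1 = (proj1_sig (f (mk_point N i 0 (leq0n _)))).1 /\
    (proj1_sig (f (mk_point N i j h))).2 = j.
Proof.
  intros Hf i j; induction j as [|j IH]; intros h.
  - split; [do 3 f_equal; apply path_point_eq; reflexivity|].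
    apply path_model_source, (iso_source Hf), path_model_source. reflexivity.
  - have h' : j <= N + i by lia.
    destruct (IH h') as [IH1 IH2].
    have He : edge E (path_model N) (mk_point N i j h') (mk_point N i j.+1 h).
    { apply edge_path_model. unfold path_edge; simpl. split; [reflexivity|lia]. }
    apply (iso_edge E _ _ Hf), edge_path_model in He. destruct He as [He1 He2]. split; lia.
Qed.

(* Since sinks go to sinks, the image path has the same length [N + i],
   hence is the path through (i, 0) itself. *)
Lemma path_model_rigid N (f : path_model N -> path_model N) :
  is_iso _ _ f -> forall x, f x = x.
Proof.
  intros Hf [[i j] h].
  have hN : N + i <= N + i by lia.
  destruct (path_model_iso_along Hf i (N + i) hN) as [E1 E2].
  have Hend : sink (path_model N) (f (mk_point N i (N + i) hN)).
  { apply (iso_sink Hf), path_model_sink. reflexivity. }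
  apply path_model_sink in Hend. rewrite E2 E1 in Hend.
  destruct (path_model_iso_along Hf i j h) as [F1 F2].
  apply path_point_eq. change (proj1_sig (f (mk_point N i j h)) = (i, j)).
  destruct (proj1_sig (f (mk_point N i j h))) as [a b] eqn:Ef. cbn [fst snd] in *.
  f_equal; lia.
Qed.

Lemma path_model_has_path N n : forall i j (h : j <= N + i),
  j + n <= N + i -> has_path (path_model N) n (mk_point N i j h).
Proof.
  induction n as [|n IH]; intros i j h hn; cbn [has_path]; [exact I|].
  have h' : j.+1 <= N + i by lia.
  exists (mk_point N i j.+1 h'). split.
  - apply edge_path_model. unfold path_edge; simpl. split; [reflexivity|lia].
  - apply IH. lia.
Qed.

Lemma path_model_axiom N (ax : axiom) :
  axiom_length ax <= N -> fo_models (path_model N) (axiom_form ax).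
Proof.
  intros hb e.
  destruct ax as [i|s| | |n|n]; cbn [axiom_form axiom_length] in *.
  - unfold Fbinary. case: ifP => [/andP [E1 E2]|Ei]; [|apply eval_Ftrue].
    cbn [eval]. rewrite eval_Fexists_below. intros [g [[_ [Hr _]] Hne]].
    have h1 : 1 < ar E by lia.
    have := Hr (Ordinal E2) (Ordinal h1) ltac:(simpl; lia) ltac:(simpl; lia).
    simpl. rewrite E2 h1. intros Heq. apply Hne. rewrite E2 h1. exact Heq.
  - unfold Fempty. destruct (excluded_middle_informative (s = E)) as [eE|hs]; [apply eval_Ftrue|].
    cbn [is_left eval]. rewrite eval_Fexists_below. intros [g [Hs _]]. exact (hs Hs).
  - apply eval_Fin_functional. intros x y z h1 h2.
    apply edge_path_model in h1, h2. unfold path_edge in *. apply path_point_eq.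
    destruct (proj1_sig y) as [y1 y2]; destruct (proj1_sig z) as [z1 z2].
    cbn [fst snd] in *. f_equal; lia.
  - apply eval_Fout_functional. intros x y z h1 h2.
    apply edge_path_model in h1, h2. unfold path_edge in *. apply path_point_eq.
    destruct (proj1_sig y) as [y1 y2]; destruct (proj1_sig z) as [z1 z2].
    cbn [fst snd] in *. f_equal; lia.
  - apply eval_Fpaths. intros [[i j] h] ha. apply path_model_source in ha.
    cbn [proj1_sig snd] in ha. subst j. apply path_model_has_path. lia.
  - apply (@Fsources_complete (path_model N) (fun i => mk_point N i 0 (leq0n _))).
    + intros i. apply path_model_source. reflexivity.
    + intros i j Eij. apply (f_equal (@proj1_sig _ _)) in Eij. simpl in Eij. congruence.
    + intros i hi; lia.
Qed.

Lemma rel_binary {A : structure S} (i0 i1 : 'I_(ar E)) :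
  nat_of_ord i0 = 0 -> nat_of_ord i1 = 1 ->
  (forall (a : 'I_(ar E) -> A) (j j1 : 'I_(ar E)), nat_of_ord j1 = 1 -> 2 <= j ->
      Defs.rel A E a -> a j = a j1) ->
  forall a : 'I_(ar E) -> A,
    Defs.rel A E a <-> (forall j : 'I_(ar E), 2 <= j -> a j = a i1) /\ edge E A (a i0) (a i1).
Proof.
  intros h0 h1 Hbin a.
  have Ea : (forall j : 'I_(ar E), 2 <= j -> a j = a i1) ->
            (fun i : 'I_(ar E) => if nat_of_ord i == 0 then a i0 else a i1) = a.
  { intros Hsh. apply functional_extensionality; intros j.
    case: eqP => [Ej|Ej].
    - f_equal. apply val_inj. simpl. by rewrite Ej h0.
    - destruct (Nat.eq_dec (nat_of_ord j) 1) as [E1|E1].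
      + f_equal. apply val_inj. simpl. by rewrite E1 h1.
      + symmetry. apply Hsh. lia. }
  split.
  - intros H. have Hsh : forall j : 'I_(ar E), 2 <= j -> a j = a i1.
    { intros j hj. apply (Hbin a j i1 h1 hj H). }
    split; [exact Hsh|]. unfold edge. rewrite (Ea Hsh). exact H.
  - intros [Hsh He]. unfold edge in He. rewrite (Ea Hsh) in He. exact He.
Qed.

Section Chains.

(* In a graph with in- and out-degrees at most one in which every source
   starts an infinite path, the points reachable from a source [a] form a
   ray [chain a 0 -> chain a 1 -> ...], and rays from different sources are
   disjoint. *)
Variable A : structure S.
Hypothesis Hin : in_functional A.
Hypothesis Hout : out_functional A.
Hypothesis Hpaths : forall n a, source A a -> has_path A n a.

Definition successor (a : A) : A := epsilon (@carrier_inh S A) (fun b => edge E A a b).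

Fixpoint chain (a : A) (n : nat) : A :=
  match n with 0 => a | n'.+1 => successor (chain a n') end.

Lemma chain_has_path j : forall m (x : A), has_path A (j + m) x -> has_path A m (chain x j).
Proof.
  induction j as [|j IH]; intros m x H; [exact H|].
  rewrite addSnnS in H. apply IH in H. cbn [has_path] in H. destruct H as [b [h1 h2]].
  cbn [chain].
  have hs : edge E A (chain x j) (successor (chain x j)).
  { apply (epsilon_spec (@carrier_inh S A) (fun b => edge E A (chain x j) b)). exists b; exact h1. }
  rewrite -(Hout _ _ _ h1 hs). exact h2.
Qed.

Lemma chain_edge {x} j : source A x -> edge E A (chain x j) (chain x j.+1).
Proof.
  intros hx. have := chain_has_path j 1 x (Hpaths _ _ hx). cbn [has_path]. intros [b [h1 _]].
  apply (epsilon_spec (@carrier_inh S A) (fun b => edge E A (chain x j) b)). exists b; exact h1.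
Qed.

Lemma chain_inj i : forall j (x y : A), source A x -> source A y ->
  chain x i = chain y j -> x = y /\ i = j.
Proof.
  induction i as [|i IH]; intros [|j] x y hx hy Exy.
  - split; [exact Exy|reflexivity].
  - exfalso. apply hx. exists (chain y j). cbn [chain] in Exy. rewrite Exy. exact (chain_edge j hy).
  - exfalso. apply hy. exists (chain x i). cbn [chain] in Exy. rewrite -Exy. exact (chain_edge i hx).
  - have h1 := chain_edge i hx. have h2 := chain_edge j hy.
    rewrite Exy in h1. destruct (IH j x y hx hy (Hin _ _ _ h1 h2)). split; auto.
Qed.

Lemma chain_pred {x z j} : source A x -> edge E A z (chain x j) ->
  exists j', j = j'.+1 /\ z = chain x j'.
Proof.
  intros hx hz. destruct j as [|j]; [exfalso; apply hx; exists z; exact hz|].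
  exists j; split; [reflexivity|]. exact (Hin _ _ _ hz (chain_edge j hx)).
Qed.

Lemma chain_succ {x z j} : source A x -> edge E A (chain x j) z -> z = chain x j.+1.
Proof. intros hx hz. exact (Hout _ _ _ hz (chain_edge j hx)). Qed.

(* From now on [s] enumerates distinct sources; for [g : nat -> bool] the
   map [swap g] exchanges the rays from [s (2 i)] and [s (2 i + 1)] when
   [g i] holds and fixes everything else. *)
Variable s : nat -> A.
Hypothesis Hs : forall i, source A (s i).
Hypothesis Hsi : injective s.

Lemma chain_source_inj a b j j' : chain (s a) j = chain (s b) j' -> a = b /\ j = j'.
Proof.
  intros Eab. destruct (chain_inj j j' _ _ (Hs a) (Hs b) Eab) as [E1 E2].
  split; [apply Hsi; exact E1|exact E2].
Qed.

Definition swapped (g : nat -> bool) (z w : A) : Prop :=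
  (exists i j, g i = true /\ z = chain (s (2 * i)) j /\ w = chain (s (2 * i + 1)) j) \/
  (exists i j, g i = true /\ z = chain (s (2 * i + 1)) j /\ w = chain (s (2 * i)) j) \/
  ((~ exists i j, g i = true /\ (z = chain (s (2 * i)) j \/ z = chain (s (2 * i + 1)) j)) /\ w = z).

Lemma swapped_functional g z w1 w2 : swapped g z w1 -> swapped g z w2 -> w1 = w2.
Proof.
  intros [[i [j [hg [-> ->]]]]|[[i [j [hg [-> ->]]]]|[hn ->]]]
         [[i' [j' [hg' [Ez ->]]]]|[[i' [j' [hg' [Ez ->]]]]|[hn' ->]]];
    try (destruct (chain_source_inj _ _ _ _ Ez) as [E1 E2]; subst; try lia;
         have -> : i = i' by lia; reflexivity);
    try (exfalso; apply hn'; do 2 eexists; split; [eassumption|]; (left + right); reflexivity);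
    try (exfalso; apply hn; do 2 eexists; split; [eassumption|]; (left + right); eassumption);
    reflexivity.
Qed.

Lemma swapped_sym g z w : swapped g z w -> swapped g w z.
Proof.
  intros [[i [j [hg [-> ->]]]]|[[i [j [hg [-> ->]]]]|[hn ->]]].
  - right; left. exists i, j. auto.
  - left. exists i, j. auto.
  - right; right. auto.
Qed.

Lemma swapped_total g z : exists w, swapped g z w.
Proof.
  destruct (classic (exists i j, g i = true /\
                      (z = chain (s (2 * i)) j \/ z = chain (s (2 * i + 1)) j)))
    as [[i [j [hg [Ez|Ez]]]]|hn].
  - exists (chain (s (2 * i + 1)) j). left. exists i, j. auto.
  - exists (chain (s (2 * i)) j). right; left. exists i, j. auto.
  - exists z. right; right. auto.
Qed.

Definition swap (g : nat -> bool) (z : A) : A := epsilon (@carrier_inh S A) (swapped g z).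

Lemma swap_eq {g z w} : swapped g z w -> swap g z = w.
Proof.
  apply swapped_functional. apply (epsilon_spec (@carrier_inh S A) (swapped g z)).
  apply swapped_total.
Qed.

Lemma swap_involutive g z : swap g (swap g z) = z.
Proof.
  apply swap_eq, swapped_sym.
  apply (epsilon_spec (@carrier_inh S A) (swapped g z)), swapped_total.
Qed.

Lemma swap_edge g z z' : edge E A z z' -> edge E A (swap g z) (swap g z').
Proof.
  intros He.
  have Hz : swapped g z (swap g z).
  { apply (epsilon_spec (@carrier_inh S A) (swapped g z)), swapped_total. }
  destruct Hz as [[i [j [hg [Ez Ew]]]]|[[i [j [hg [Ez Ew]]]]|[hn Ew]]]; rewrite Ew.
  - rewrite Ez in He. rewrite (swap_eq (w := chain (s (2 * i + 1)) j.+1)).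
    + apply chain_edge, Hs.
    + left. exists i, j.+1. split; [exact hg|split; [exact (chain_succ (Hs _) He)|reflexivity]].
  - rewrite Ez in He. rewrite (swap_eq (w := chain (s (2 * i)) j.+1)).
    + apply chain_edge, Hs.
    + right; left. exists i, j.+1. split; [exact hg|split; [exact (chain_succ (Hs _) He)|reflexivity]].
  - rewrite (swap_eq (w := z')); [exact He|].
    right; right. split; [|reflexivity].
    intros [i [j [hg [Ez'|Ez']]]]; rewrite Ez' in He;
      destruct (chain_pred (Hs _) He) as [j' [_ Ej']]; apply hn; exists i, j'; auto.
Qed.

Hypothesis Hbinary : forall (a : 'I_(ar E) -> A) (j j1 : 'I_(ar E)),
  nat_of_ord j1 = 1 -> 2 <= j -> Defs.rel A E a -> a j = a j1.
Hypothesis Hempty : forall s0 (a : 'I_(ar s0) -> A), s0 <> E -> ~ Defs.rel A s0 a.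

Lemma swap_iso g : is_iso A A (swap g).
Proof.
  have Inv := swap_involutive g.
  have Inj : injective (swap g) by apply (can_inj Inv).
  have Ed' : forall z z', edge E A (swap g z) (swap g z') -> edge E A z z'.
  { intros z z' H. rewrite -(Inv z) -(Inv z'). apply swap_edge, H. }
  split; [exists (swap g); exact Inv|].
  intros s0 a. destruct (classic (s0 = E)) as [->|hs].
  - have h0 : 0 < ar E by lia.
    have h1 : 1 < ar E by lia.
    rewrite !(rel_binary (Ordinal h0) (Ordinal h1) erefl erefl Hbinary).
    split; intros [H1 H2]; split.
    + intros j hj; rewrite (H1 j hj); reflexivity.
    + apply swap_edge, H2.
    + intros j hj; apply Inj, H1, hj.
    + apply Ed', H2.
  - split; intros H; exfalso; exact (Hempty _ _ hs H).
Qed.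

Lemma swap_source g i : swap g (s (2 * i)) = if g i then s (2 * i + 1) else s (2 * i).
Proof.
  apply swap_eq. case Eg: (g i).
  - left. exists i, 0. auto.
  - right; right. split; [|reflexivity].
    intros [i' [j' [hg [Ez|Ez]]]]; apply esym in Ez;
      destruct (chain_source_inj _ _ _ 0 Ez) as [E1 E2]; [|lia].
    have Ei : i' = i by lia. congruence.
Qed.

Lemma swaps_many : card_le (nat -> bool) (Aut A).
Proof.
  exists (fun g => exist _ (swap g) (swap_iso g)).
  intros g h Egh. apply (f_equal (@proj1_sig _ _)) in Egh. cbn [proj1_sig] in Egh.
  apply functional_extensionality; intros i.
  have := f_equal (fun F => F (s (2 * i))) Egh. cbn beta. rewrite !swap_source.
  destruct (g i); destruct (h i); auto; intros Ei; apply Hsi in Ei; lia.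
Qed.

End Chains.

Lemma axioms_many_automorphisms (A : structure S) :
  (forall ax, fo_models A (axiom_form ax)) -> card_le (nat -> bool) (Aut A).
Proof.
  intros HA. destruct (@carrier_inh S A) as [d].
  have Hin : in_functional A := proj1 (eval_Fin_functional A (fun _ => d)) (HA AxInFunctional _).
  have Hout : out_functional A := proj1 (eval_Fout_functional A (fun _ => d)) (HA AxOutFunctional _).
  have Hpaths : forall n a, source A a -> has_path A n a.
  { intros n. exact (proj1 (eval_Fpaths A (fun _ => d) n) (HA (AxPaths n) _)). }
  have Hsources : forall n, exists h : nat -> A,
      (forall i, i < n -> source A (h i)) /\ injective_below h n.
  { intros n. destruct (@Fsources_sound A n 0 (fun _ => d) (HA (AxSources n) _)) as [h Hh];
      [intros i hi; lia|intros i j hi; lia|exists h; exact Hh]. }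
  destruct (injective_sequence (@carrier_inh S A) Hsources) as [s [Hs Hsi]].
  exact (@swaps_many A Hin Hout Hpaths s Hs Hsi (Fbinary_sound A (fun i => HA (AxBinary i)))
                    (Fempty_sound A (fun s => HA (AxEmpty s)))).
Qed.

End GraphAxioms.

Arguments axiom_form {S} E ax.
Arguments axiom_sentence {S} E ax.
Arguments axiom_length {S} ax.
Arguments path_model {S} E N.
Arguments path_model_rigid {S E} HE {N} f _ x.
Arguments path_model_axiom {S E} HE {N} ax _ e.
Arguments axioms_many_automorphisms {S E} HE {A} _.

Lemma countable_range {X I : Type} (c : I -> nat) (x0 : X) (tr : I -> X) :
  injective c -> countable_set (fun x => x = x0 \/ exists i, x = tr i).
Proof.
  intros hc.
  exists (fun x => match excluded_middle_informative (exists i, x = tr i /\ x <> x0) with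
                   | left h => (c (proj1_sig (constructive_indefinite_description _ h))).+1
                   | right _ => 0 end).
  intros x y hx hy.
  have Hrange : forall z, (z = x0 \/ exists i, z = tr i) -> ~ (exists i, z = tr i /\ z <> x0) -> z = x0.
  { intros z [->|[i ->]] hn; [reflexivity|]. apply NNPP; intros hne. apply hn. exists i; auto. }
  destruct (excluded_middle_informative (exists i, x = tr i /\ x <> x0)) as [ex|nx];
  destruct (excluded_middle_informative (exists i, y = tr i /\ y <> x0)) as [ey|ny];
    intros Exy; try discriminate.
  - destruct (constructive_indefinite_description _ ex) as [i Hi].
    destruct (constructive_indefinite_description _ ey) as [j Hj].
    cbn [proj1_sig] in Exy. rewrite (proj1 Hi) (proj1 Hj). have -> : i = j by apply hc; lia. reflexivity.
  - by rewrite (Hrange x hx nx) (Hrange y hy ny).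
Qed.

Lemma list_bounded {X I : Type} (x0 : X) (tr : I -> X) (size : I -> nat) (l : list X) :
  (forall x, In x l -> x = x0 \/ exists i, x = tr i) ->
  exists N, forall x, In x l -> x = x0 \/ exists i, x = tr i /\ size i <= N.
Proof.
  induction l as [|x l IH]; intros Hl; [exists 0; intros x []|].
  destruct IH as [N HN]; [intros y hy; apply Hl; right; exact hy|].
  destruct (Hl x (or_introl erefl)) as [Ex|[i Ei]].
  - exists N. intros y [<-|hy]; [left; exact Ex|apply HN, hy].
  - exists (maxn N (size i)). intros y [<-|hy].
    + right. exists i. split; [exact Ei|apply leq_maxr].
    + destruct (HN y hy) as [Ey|[j [Ej Hj]]]; [left; exact Ey|right; exists j; split; [exact Ej|]].
      apply (leq_trans Hj), leq_maxl.
Qed.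

Lemma FO_translation {S : signature} (L : abstract_logic S) (phi : form S) :
  geq_FO L -> is_sentence phi ->
  { psi : sentence L | forall A, models L A psi <-> fo_models A phi }.
Proof.
  intros Hge Hs. apply constructive_indefinite_description.
  apply Hge. exists phi. split; [exact Hs|tauto].
Qed.

Definition axiom_code {S : signature} (fs : sym S -> nat) (ax : axiom S) : nat :=
  Cantor.to_nat (match ax with
                 | AxBinary i => (0, i)
                 | AxEmpty s => (1, fs s)
                 | AxInFunctional => (2, 0)
                 | AxOutFunctional => (3, 0)
                 | AxPaths n => (4, n)
                 | AxSources n => (5, n)
                 end).

Lemma axiom_code_inj {S : signature} {fs : sym S -> nat} : injective fs -> injective (axiom_code fs).
Proof.
  intros hfs a b Eab. apply Cantor.to_nat_inj in Eab.
  destruct a; destruct b; inversion Eab; try reflexivity; f_equal; apply hfs; assumption.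
Qed.

Section NonCompactness.

Variables (S : signature) (E : sym S).
Hypothesis HE : 2 <= ar E.

(* Add [phiP], expressing an admissible property of [Aut], to the axioms.
   Every finite part holds in some rigid [path_model N], but a model of
   the whole set would have an admissible automorphism group of size at
   least 2^aleph0. *)
Lemma not_aleph0_compact (Q : Type -> Prop) (L : abstract_logic S) :
  countable_signature S -> admissible Q ->
  geq_FO L -> expressible L (fun A : structure S => Q (Aut A)) -> ~ aleph0_compact L.
Proof.
  intros [fs hfs] HQ Hge [phiP HP] Hcomp.
  set tr := fun ax => proj1_sig (FO_translation L (axiom_form E ax) Hge (axiom_sentence E ax)).
  have Htr : forall ax A, models L A (tr ax) <-> fo_models A (axiom_form E ax).
  { intros ax. exact (proj2_sig (FO_translation L _ Hge (axiom_sentence E ax))). }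
  set T := fun psi => psi = phiP \/ exists ax, psi = tr ax.
  have Hfin : finitely_satisfiable L T.
  { intros l Hl. destruct (list_bounded phiP tr (@axiom_length S) l Hl) as [N HN].
    exists (path_model E N). intros psi hpsi. destruct (HN psi hpsi) as [->|[ax [-> Hax]]].
    - apply HP, (rigid_admissible HQ), (path_model_rigid HE).
    - apply Htr, (path_model_axiom HE), Hax. }
  destruct (Hcomp T (countable_range (axiom_code fs) phiP tr (axiom_code_inj hfs)) Hfin) as [A HA].
  have HQA : Q (Aut A) by apply HP, HA; left; reflexivity.
  apply (proj2 HQ _ HQA), (axioms_many_automorphisms HE). intros ax. apply Htr, HA. right. exists ax; reflexivity.
Qed.

End NonCompactness.

Arguments not_aleph0_compact {S E} HE {Q} L _ _ _ _ _.

(* With a sound and complete proof system, an unsatisfiable set [T] proves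
   the negation of one of its members [phi0] from finitely many premisses,
   which together with [phi0] are then unsatisfiable. *)
Lemma sound_complete_compact {S : signature} {L : abstract_logic S} :
  closed_under_negation L -> (exists PS : proof_system L, sound PS /\ complete PS) ->
  aleph0_compact L.
Proof.
  intros Hneg [PS [Hs Hc]] T _ Hfs. apply NNPP; intros Hns.
  destruct (classic (exists phi, T phi)) as [[phi0 h0]|Hemp].
  - destruct (Hneg phi0) as [psi Hpsi].
    have Hent : entails L T psi by (intros A HA; exfalso; apply Hns; exists A; exact HA).
    destruct (Hc T psi Hent) as [pi [Hcon Hprem]].
    destruct (Hfs (phi0 :: premisses pi)) as [A HA].
    { intros phi [<-|h]; [exact h0|apply Hprem, h]. }
    have Hm := Hs pi A (fun phi h => HA phi (or_intror h)).
    rewrite Hcon in Hm. apply Hpsi in Hm. apply Hm, HA. left; reflexivity.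
  - destruct (Hfs nil) as [A _]; [intros phi []|].
    apply Hns. exists A. intros phi hphi. exfalso. apply Hemp. exists phi; exact hphi.
Qed.

Lemma admissible_conclusions {S : signature} {E : sym S} {Q : Type -> Prop} :
  countable_signature S -> 2 <= ar E -> admissible Q ->
  main_conclusions (fun A : structure S => Q (Aut A)).
Proof.
  intros hc HE HQ. split; [|split].
  - exact (not_FO_expressible HE HQ).
  - intros L Hge HP. exact (not_aleph0_compact HE L hc HQ Hge HP).
  - intros L Hge HP Hneg Hps. exact (not_aleph0_compact HE L hc HQ Hge HP (sound_complete_compact Hneg Hps)).
Qed.

Theorem mainTheorem5 :
  forall S : signature,
    countable_signature S ->
    (exists s : sym S, 2 <= ar s) ->
    (forall Omega : Type -> Prop,
        cardinal_set Omega ->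
        (forall X : Type, Omega X -> card_lt X (nat -> bool)) ->
        Omega unit ->
        main_conclusions (fun A : structure S => Omega (Aut A)))
    /\ main_conclusions (fun A : structure S => card_le (Aut A) nat)
    /\ main_conclusions (fun A : structure S => exists n : nat, card_le (Aut A) 'I_n).
Proof.
  intros S hc [E HE]. split; [|split].
  - intros Omega Hc Hlt Hu. exact (admissible_conclusions hc HE (admissible_Omega Hc Hlt Hu)).
  - exact (admissible_conclusions hc HE admissible_countable).
  - exact (admissible_conclusions hc HE admissible_finite).
Qed.
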